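(* Let $\mathcal F:\mathbb R^d\to\mathbb R$ satisfy: (A1) $\inf\mathcal F>-\infty$; (A2) there exist $L_{\mathcal F},c_u,c_l,R_l>0$ with $|\mathcal F(x)-\mathcal F(y)|\le L_{\mathcal F}(1+|x|+|y|)|x-y|$ for all $x,y$, $\mathcal F(x)-\mathcal F(x^* )\le c_u(1+|x|^2)$ for all $x$, and $\mathcal F(x)-\mathcal F(x^* )\ge c_l|x|^2$ for all $|x|>R_l$, where $x^*$ is a global minimizer of $\mathcal F$. Let $\alpha>0$, $K>0$ and $\mu,\hat\mu\in\mathcal P(\mathbb R^d)$ with $\int|x|^4\mu(dx)\le K$ and $\int|x|^4\hat\mu(dx)\le K$. Then $$|X^\alpha[\mu]-X^\alpha[\hat\mu]|\le C_0\,\mathcal W_1(\mu,\hat\mu),$$ where $C_0>0$ depends only on $\alpha,L_{\mathcal F},K$.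
   Context: $X^\alpha[\rho]=\int x\,\omega_\alpha(x)\rho(dx)/\int\omega_\alpha(x)\rho(dx)$ with $\omega_\alpha(x)=\exp(-\alpha\mathcal F(x))$; $\mathcal W_1$ is the $1$-Wasserstein distance with respect to the Euclidean metric. *)

From HB Require Import structures.
From mathcomp Require Import all_boot all_order all_algebra.
From mathcomp Require Import all_classical all_reals all_analysis.
Set Implicit Arguments. Unset Strict Implicit. Unset Printing Implicit Defensive.
Import Order.TTheory GRing.Theory Num.Theory.
Import numFieldNormedType.Exports.
Local Open Scope classical_set_scope.
Local Open Scope ring_scope.

Definition Rd (R : realType) (n : nat) :=
  g_sigma_algebraType (@open 'rV[R]_n).

Definition enorm (R : realType) (n : nat) (v : 'rV[R]_n) : R :=
  Num.sqrt (\sum_(i < n) v ord0 i ^+ 2).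

Definition omega (R : realType) (n : nat) (alpha : R) (F : 'rV[R]_n -> R)
  (x : 'rV[R]_n) : R := expR (- (alpha * F x)).

Definition Xalpha (R : realType) (n : nat) (alpha : R) (F : 'rV[R]_n -> R)
  (rho : probability (Rd R n) R) : 'rV[R]_n :=
  (Rintegral rho setT (omega alpha F))^-1 *:
    \row_(i < n) Rintegral rho setT (fun x : Rd R n => x ord0 i * omega alpha F x).

Definition moment4 (R : realType) (n : nat) (rho : probability (Rd R n) R)
  : \bar R := (\int[rho]_x ((enorm x) ^+ 4)%:E)%E.

Definition coupling (R : realType) (n : nat) (mu nu : probability (Rd R n) R)
  (pi : probability (Rd R n * Rd R n)%type R) : Prop :=
  (forall A : set (Rd R n), measurable A -> pi (fst @^-1` A) = mu A) /\
  (forall A : set (Rd R n), measurable A -> pi (snd @^-1` A) = nu A).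

Definition W1 (R : realType) (n : nat) (mu nu : probability (Rd R n) R)
  : \bar R :=
  ereal_inf [set c | exists pi : probability (Rd R n * Rd R n)%type R,
     coupling mu nu pi /\
     c = (\int[pi]_z (enorm (z.1 - z.2))%:E)%E].

(* The weight w = exp (-alpha F) decays like exp (-alpha c_l |x|^2), so
   (1 + |x|)^2 w(x) is bounded; with the locally Lipschitz bound on F this
   makes w and each x_i w globally Lipschitz.  Integrating them against a
   coupling of mu and muh bounds the differences of the numerators and of the
   denominators of X^alpha by a multiple of the transport cost.  On the ball
   of fourth moments <= K the denominators stay above a positive constant,
   because exp (-s) >= exp (-b) (1 + b - s) and F - F xstar grows at most
   quadratically.  Taking the infimum over couplings yields W1. *)

From HB Require Import structures.
From mathcomp Require Import all_boot all_order all_algebra.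
From mathcomp Require Import all_classical all_reals all_analysis.
From mathcomp Require Import ring lra measurable_realfun.
Set Implicit Arguments. Unset Strict Implicit.
Import Order.TTheory GRing.Theory Num.Theory.
Import numFieldNormedType.Exports.
Local Open Scope classical_set_scope.
Local Open Scope ring_scope.

Section EuclideanNorm.
Variables (R : realType) (n : nat).
Implicit Types x y : 'rV[R]_n.

Lemma enorm_ge0 x : 0 <= enorm x.
Proof. exact: sqrtr_ge0. Qed.

Lemma enorm_sqr x : enorm x ^+ 2 = \sum_(i < n) x ord0 i ^+ 2.
Proof. by rewrite /enorm sqr_sqrtr // sumr_ge0 // => i _; exact: sqr_ge0. Qed.

Lemma coord_le_enorm x i : `|x ord0 i| <= enorm x.
Proof.
rewrite -ler_sqr ?nnegrE ?enorm_ge0 // enorm_sqr real_normK ?num_real //.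
by rewrite (bigD1 i) //= lerDl sumr_ge0 // => j _; exact: sqr_ge0.
Qed.

(* Lagrange's identity: the defect of Cauchy-Schwarz is a sum of squares. *)
Lemma cauchy_schwarz (u v : 'I_n -> R) :
  (\sum_i u i * v i) ^+ 2 <= (\sum_i u i ^+ 2) * (\sum_i v i ^+ 2).
Proof.
have lagrange : \sum_i \sum_j (u i * v j - u j * v i) ^+ 2 =
    (\sum_i u i ^+ 2) * (\sum_j v j ^+ 2) + (\sum_i v i ^+ 2) * (\sum_j u j ^+ 2)
    - 2 * (\sum_i u i * v i) ^+ 2.
  rewrite expr2 !big_distrlr mulr_sumr -big_split -sumrB /=.
  apply: eq_bigr => i _; rewrite mulr_sumr -big_split -sumrB /=.
  by apply: eq_bigr => j _; ring.
have : 0 <= \sum_i \sum_j (u i * v j - u j * v i) ^+ 2.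
  by apply: sumr_ge0 => i _; apply: sumr_ge0 => j _; exact: sqr_ge0.
rewrite lagrange [X in _ + X - _]mulrC; lra.
Qed.

Lemma ler_enormD x y : enorm (x + y) <= enorm x + enorm y.
Proof.
rewrite -ler_sqr ?nnegrE ?addr_ge0 ?enorm_ge0 //.
have dot_le : \sum_i x ord0 i * y ord0 i <= enorm x * enorm y.
  apply: le_trans (ler_norm _) _.
  rewrite -ler_sqr ?nnegrE ?mulr_ge0 ?enorm_ge0 // real_normK ?num_real //.
  by rewrite exprMn !enorm_sqr cauchy_schwarz.
have -> : enorm (x + y) ^+ 2 =
    enorm x ^+ 2 + enorm y ^+ 2 + 2 * \sum_i x ord0 i * y ord0 i.
  rewrite !enorm_sqr mulr_sumr -!big_split /=; apply: eq_bigr => i _.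
  by rewrite !mxE; ring.
lra.
Qed.

Lemma enormN x : enorm (- x) = enorm x.
Proof. by rewrite /enorm; congr Num.sqrt; apply: eq_bigr => i _; rewrite mxE sqrrN. Qed.

Lemma enorm_distC x y : enorm (x - y) = enorm (y - x).
Proof. by rewrite -enormN opprB. Qed.

Lemma enorm_le_distD x y : enorm y <= enorm x + enorm (x - y).
Proof. by have := ler_enormD x (y - x); rewrite addrC subrK enorm_distC. Qed.

Lemma enorm_le_sum_norm x : enorm x <= \sum_i `|x ord0 i|.
Proof.
rewrite -ler_sqr ?nnegrE ?enorm_ge0 ?sumr_ge0 // enorm_sqr.
rewrite expr2 mulr_suml; apply: ler_sum => i _.
rewrite -real_normK ?num_real // expr2 ler_wpM2l //.
by rewrite (bigD1 i) //= lerDl sumr_ge0.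
Qed.

Lemma coord_le_mx_norm x i : `|x ord0 i| <= `|x|.
Proof.
have /mapP[j _ ->] : `|x ord0 i| \in [seq `|x k.1 k.2| | k : 'I_1 * 'I_n].
  by apply/mapP; exists (ord0, i) => //=; rewrite mem_enum.
by rewrite [leRHS]/Num.Def.normr /= mx_normrE; apply/bigmax_geP; right; exists j.
Qed.

Lemma enorm_le_mx_norm x : enorm x <= n%:R * `|x|.
Proof.
apply: le_trans (enorm_le_sum_norm x) _.
apply: le_trans (ler_sum _ (fun i _ => coord_le_mx_norm x i)) _.
by rewrite sumr_const card_ord mulr_natl.
Qed.

End EuclideanNorm.

Lemma expR_dist_le (R : realType) (u v : R) :
  `|expR u - expR v| <= `|u - v| * (expR u + expR v).
Proof.
wlog uv : u v / u <= v.
  move=> ordered; case: (leP u v) => [/ordered //|/ltW/ordered dist_le].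
  by rewrite distrC (distrC u) (addrC (expR u)).
rewrite distrC ger0_norm ?subr_ge0 ?ler_expR // distrC ger0_norm ?subr_ge0 //.
have split_u : expR u = expR (u - v) * expR v by rewrite -expRD subrK.
have tangent : 1 + (u - v) <= expR (u - v) := expR_ge1Dx _.
apply: (@le_trans _ _ ((v - u) * expR v)).
  by rewrite split_u; have := expR_gt0 v; nra.
by rewrite ler_wpM2l ?subr_ge0 // lerDr expR_ge0.
Qed.

Lemma sqr1D_mul_expN_le (R : realType) (c Rl t e : R) :
  0 < c -> 0 <= t -> 0 <= e -> (Rl < t -> c * t ^+ 2 <= e) ->
  (1 + t) ^+ 2 * expR (- e) <= (1 + Rl) ^+ 2 + 2 + 2 / c.
Proof.
move=> c_gt0 t_ge0 e_ge0 growth.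
have expNe_gt0 := expR_gt0 (- e).
have expNe_le1 : expR (- e) <= 1 by rewrite expR_le1 lerNl oppr0.
have Rl_ge0 := sqr_ge0 (1 + Rl).
have c_ge0 : 0 <= 2 / c by rewrite divr_ge0 // ltW.
case: (lerP t Rl) => [t_le|t_gt].
  have : (1 + t) ^+ 2 <= (1 + Rl) ^+ 2 by rewrite ler_sqr ?nnegrE; lra.
  nra.
have tangent : 1 + e <= expR e := expR_ge1Dx _.
have expNeK : expR (- e) * expR e = 1 by rewrite -expRD addNr expR0.
have sqr1D_le : (1 + t) ^+ 2 <= 2 + 2 * t ^+ 2.
  by have := sqr_ge0 (1 - t); rewrite !expr2; nra.
have : 2 + 2 * t ^+ 2 <= (2 + 2 / c) * (1 + c * t ^+ 2).
  have : 2 / c * c = 2 by rewrite mulfVK // gt_eqF.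
  nra.
have := growth t_gt; nra.
Qed.

Lemma dist_invrM_le (R : realFieldType) (N1 N2 Z1 Z2 z0 M e1 e2 : R) :
  0 < z0 -> z0 <= Z1 -> z0 <= Z2 -> `|N2| <= M -> `|N1 - N2| <= e1 ->
  `|Z1 - Z2| <= e2 ->
  `|Z1^-1 * N1 - Z2^-1 * N2| <= e1 / z0 + M * e2 / z0 ^+ 2.
Proof.
move=> z0_gt0 z0_le1 z0_le2 N2_le dN dZ.
have Z1_gt0 : 0 < Z1 by apply: lt_le_trans z0_le1.
have Z2_gt0 : 0 < Z2 by apply: lt_le_trans z0_le2.
have e1_ge0 : 0 <= e1 by apply: le_trans dN.
have e2_ge0 : 0 <= e2 by apply: le_trans dZ.
have M_ge0 : 0 <= M by apply: le_trans N2_le.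
have -> : Z1^-1 * N1 - Z2^-1 * N2 = (N1 - N2) / Z1 + N2 * (Z2 - Z1) / (Z1 * Z2).
  by field; rewrite !gt_eqF.
apply: le_trans (ler_normD _ _) _; apply: lerD.
  rewrite normrM normfV (gtr0_norm Z1_gt0).
  apply: le_trans (ler_wpM2r _ dN) _; first by rewrite invr_ge0 ltW.
  by rewrite ler_wpM2l // lef_pV2.
rewrite !normrM normfV (gtr0_norm (mulr_gt0 Z1_gt0 Z2_gt0)) distrC.
apply: le_trans (ler_wpM2r _ (ler_pM _ _ N2_le dZ)) _ => //.
- by rewrite invr_ge0 mulr_ge0 // ltW.
- rewrite ler_wpM2l ?mulr_ge0 // lef_pV2 ?posrE ?mulr_gt0 ?exprn_gt0 //.
  by rewrite expr2 ler_pM // ltW.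
Qed.

Lemma continuous_of_local_lipschitz (R : realType) (V : normedModType R)
    (f : V -> R) (C : V -> R) :
  (forall x t, `|x - t| < 1 -> `|f x - f t| <= C x * `|x - t|) -> continuous f.
Proof.
move=> f_lip x; apply/cvgrPdist_lt => e e_gt0.
have C1_gt0 : 0 < `|C x| + 1 by rewrite ltr_wpDl.
have delta_gt0 : 0 < Num.min 1 (e / (`|C x| + 1)) by rewrite lt_min ltr01 divr_gt0.
near=> t.
have : `|x - t| < Num.min 1 (e / (`|C x| + 1)).
  by near: t; exact: (@cvgr_dist_lt _ _ _ (nbhs x) _ id x cvg_id _ delta_gt0).
rewrite lt_min => /andP[xt_lt1 xt_lt].
apply: le_lt_trans (f_lip x t xt_lt1) _.
apply: (@le_lt_trans _ _ ((`|C x| + 1) * `|x - t|)); last by rewrite mulrC -ltr_pdivlMr.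
apply: le_trans (ler_norm _) _; rewrite normrM normr_id ler_wpM2r //.
by rewrite lerDl.
Unshelve. all: by end_near.
Qed.

Lemma continuous_of_enorm_lipschitz (R : realType) n (f : 'rV[R]_n -> R) (k : R) :
  (forall x y, `|f x - f y| <= k * (1 + enorm x + enorm y) * enorm (x - y)) ->
  continuous f.
Proof.
move=> f_lip.
apply: (@continuous_of_local_lipschitz _ _ _
  (fun x => `|k| * (1 + 2 * enorm x + n%:R) * n%:R)) => x t xt_lt1.
have e_le := enorm_le_mx_norm (x - t).
have e_ge0 := enorm_ge0 (x - t).
have t_le := enorm_le_distD x t.
have x_ge0 := enorm_ge0 x; have t_ge0 := enorm_ge0 t.
have n_ge0 : 0 <= n%:R :> R by [].
have n_le : n%:R * `|x - t| <= n%:R by rewrite ler_piMr // ltW.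
have growth_le : 1 + enorm x + enorm t <= 1 + 2 * enorm x + n%:R by lra.
apply: le_trans (f_lip x t) _.
apply: le_trans (ler_wpM2r e_ge0 (ler_wpM2r _ (ler_norm k))) _; first lra.
apply: (@le_trans _ _ (`|k| * (1 + 2 * enorm x + n%:R) * enorm (x - t))).
  by rewrite ler_wpM2r // ler_wpM2l.
by rewrite -[leRHS]mulrA ler_wpM2l // mulr_ge0 //; lra.
Qed.

Lemma enorm_continuous (R : realType) n : continuous (@enorm R n).
Proof.
apply: (@continuous_of_enorm_lipschitz _ _ _ 1) => x y.
have y_le := enorm_le_distD x y.
have x_le := enorm_le_distD y x; rewrite -enorm_distC in x_le.
have := enorm_ge0 x; have := enorm_ge0 y; have := enorm_ge0 (x - y).
rewrite ler_norml; nra.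
Qed.

Lemma continuous_measurable_Rd (R : realType) n (f : 'rV[R]_n -> R) :
  continuous f -> measurable_fun [set: Rd R n] (f : Rd R n -> R).
Proof.
move=> /continuousP f_cont.
apply: (measurability _ (measurable_realfun.RGenOpens.measurableE R)).
move=> _ [_ [a [b ->] <-]]; rewrite setTI.
by apply: sub_sigma_algebra; exact/f_cont/interval_open.
Qed.

Lemma measurable_coord (R : realType) n i :
  measurable_fun [set: Rd R n] (fun x : Rd R n => x ord0 i).
Proof. by apply: continuous_measurable_Rd; exact: coord_continuous. Qed.

Lemma measurable_enorm_dist (R : realType) n :
  measurable_fun [set: Rd R n * Rd R n] (fun z => enorm (z.1 - z.2)).
Proof.
have -> : (fun z : Rd R n * Rd R n => enorm (z.1 - z.2)) = Num.sqrt \o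
    (fun z : Rd R n * Rd R n => \sum_(i < n) (z.1 ord0 i - z.2 ord0 i) ^+ 2).
  apply/funext => z /=; rewrite /enorm; congr Num.sqrt.
  by apply: eq_bigr => i _; rewrite !mxE.
apply: measurableT_comp; first exact: continuous_measurable_fun (@sqrt_continuous R).
apply: measurable_sum => i; apply: measurable_funX; apply: measurable_funB.
- exact: measurableT_comp (measurable_coord i) measurable_fst.
- exact: measurableT_comp (measurable_coord i) measurable_snd.
Qed.

Section BoundedIntegrals.
Context d (T : measurableType d) (R : realType) (mu : probability T R).

Lemma bounded_integrable (g : T -> R) (B : R) :
  measurable_fun setT g -> (forall x, `|g x| <= B) ->
  mu.-integrable setT (EFin \o g).
Proof.
move=> g_meas g_le; apply/integrableP; split; first exact/measurable_EFinP.
have B_ge0 : 0 <= B by apply: le_trans (g_le point).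
apply: (@le_lt_trans _ _ (B%:E * mu setT)%E); last first.
  by rewrite probability_setT mule1 ltry.
apply: integral_le_bound => //; first exact/measurable_EFinP.
by apply: aeW => x _ /=; rewrite lee_fin.
Qed.

Lemma normr_Rintegral_le (g : T -> R) (B : R) :
  measurable_fun setT g -> (forall x, `|g x| <= B) ->
  `|Rintegral mu setT g| <= B.
Proof.
move=> g_meas g_le.
have B_ge0 : 0 <= B by apply: le_trans (g_le point).
apply: le_trans (le_normr_Rintegral _ _) _ => //; first exact: bounded_integrable g_le.
apply: (@le_trans _ _ (Rintegral mu setT (fun _ => B))).
  apply: le_Rintegral => //.
  - apply: (@bounded_integrable _ B); first exact: measurableT_comp.
    by move=> x; rewrite normr_id.
  - by apply: (@bounded_integrable _ B) => // x; rewrite ger0_norm.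
rewrite Rintegral_cst // (_ : fine _ = 1) ?mulr1 //.
exact: (congr1 fine (probability_setT mu)).
Qed.

Lemma Rintegral_comp_pushforward d' (U : measurableType d')
    (nu : probability U R) (p : T -> U) (g : U -> R) (B : R) :
  measurable_fun setT p -> (forall A, measurable A -> mu (p @^-1` A) = nu A) ->
  measurable_fun setT g -> (forall y, `|g y| <= B) ->
  Rintegral mu setT (g \o p) = Rintegral nu setT g.
Proof.
move=> p_meas p_law g_meas g_le; rewrite /Rintegral; congr fine.
transitivity (\int[pushforward mu p]_(y in setT) (g y)%:E)%E.
  rewrite integral_pushforward //; first exact/measurable_EFinP.
  rewrite preimage_setT; apply: (@bounded_integrable _ B) => //.
  exact: measurableT_comp.
by apply: eq_measure_integral => A A_meas _; exact: p_law.
Qed.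

End BoundedIntegrals.

Section Coupling.
Variables (R : realType) (n : nat) (mu nu : probability (Rd R n) R).
Variable pi : probability (Rd R n * Rd R n)%type R.
Hypothesis pi_coupling : coupling mu nu pi.
Variables (g : Rd R n -> R) (B : R).
Hypotheses (g_meas : measurable_fun setT g) (g_le : forall x, `|g x| <= B).

Lemma coupling_Rintegral_fst :
  Rintegral pi setT (fun z => g z.1) = Rintegral mu setT g.
Proof.
exact: Rintegral_comp_pushforward measurable_fst pi_coupling.1 g_meas g_le.
Qed.

Lemma coupling_Rintegral_snd :
  Rintegral pi setT (fun z => g z.2) = Rintegral nu setT g.
Proof.
exact: Rintegral_comp_pushforward measurable_snd pi_coupling.2 g_meas g_le.
Qed.

Lemma coupling_Rintegral_dist_le (L D : R) : 0 <= L ->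
  (forall x y, `|g x - g y| <= L * enorm (x - y)) ->
  (\int[pi]_z (enorm (z.1 - z.2))%:E)%E = D%:E ->
  `|Rintegral mu setT g - Rintegral nu setT g| <= L * D.
Proof.
move=> L_ge0 g_lip cost_D.
have g1_meas : measurable_fun setT (fun z : Rd R n * Rd R n => g z.1).
  exact: measurableT_comp.
have g2_meas : measurable_fun setT (fun z : Rd R n * Rd R n => g z.2).
  exact: measurableT_comp.
have gB_meas := measurable_funB g1_meas g2_meas.
have gB_le z : `|g z.1 - g z.2| <= B + B.
  by apply: le_trans (ler_normB _ _) _; apply: lerD.
have cost_int : pi.-integrable setT
    (EFin \o (fun z : Rd R n * Rd R n => enorm (z.1 - z.2))).
  apply/integrableP; split.
    by apply/measurable_EFinP; exact: measurable_enorm_dist.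
  under eq_integral do rewrite /= ger0_norm ?enorm_ge0 //.
  by rewrite cost_D ltry.
have g1_int := bounded_integrable pi g1_meas (fun z => g_le z.1).
have g2_int := bounded_integrable pi g2_meas (fun z => g_le z.2).
have gB_int := bounded_integrable pi gB_meas gB_le.
rewrite -coupling_Rintegral_fst -coupling_Rintegral_snd -RintegralB //.
apply: le_trans (le_normr_Rintegral measurableT gB_int) _.
apply: (@le_trans _ _ (Rintegral pi setT (fun z => L * enorm (z.1 - z.2)))).
  apply: le_Rintegral => //.
  - exact: integrable_norm gB_int.
  - by apply: eq_integrable (integrableZl measurableT L cost_int).
  - by move=> z _; exact: g_lip.
by rewrite RintegralZl // /Rintegral cost_D.
Qed.

End Coupling.

Lemma lee_pmul_W1 (R : realType) n (mu nu : probability (Rd R n) R) (e C : R) :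
  0 < C ->
  (forall pi D, coupling mu nu pi ->
     (\int[pi]_z (enorm (z.1 - z.2))%:E)%E = D%:E -> 0 <= D -> e <= C * D) ->
  (e%:E <= C%:E * W1 mu nu)%E.
Proof.
move=> C_gt0 e_le.
rewrite (_ : e%:E = C%:E * (e / C)%:E)%E; last by rewrite -EFinM mulrC divfK ?gt_eqF.
apply: lee_wpmul2l; first by rewrite lee_fin ltW.
apply: le_ereal_inf_tmp => _ [pi [pi_coupling ->]].
have : (0 <= \int[pi]_z (enorm (z.1 - z.2))%:E)%E.
  by apply: integral_ge0 => z _; rewrite lee_fin enorm_ge0.
case cost_D : (\int[pi]_z _)%E => [D| |] // D_ge0; last by rewrite leey.
by rewrite lee_fin ler_pdivrMr // mulrC; exact: e_le cost_D D_ge0.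
Qed.

Section FourthMoment.
Variables (R : realType) (n : nat) (mu : probability (Rd R n) R) (K : R).
Hypothesis moment4_le : (moment4 mu <= K%:E)%E.

Let quartic (x : Rd R n) := enorm x ^+ 4.

Lemma moment4_integrable : mu.-integrable setT (EFin \o quartic).
Proof.
apply/integrableP; split.
  apply/measurable_EFinP; apply: measurable_funX.
  by apply: continuous_measurable_Rd; exact: enorm_continuous.
under eq_integral do rewrite /= ger0_norm ?exprn_ge0 ?enorm_ge0 //.
by apply: le_lt_trans moment4_le _; rewrite ltry.
Qed.

Lemma Rintegral_moment4_le : Rintegral mu setT quartic <= K.
Proof.
have : (0 <= moment4 mu)%E.
  by apply: integral_ge0 => x _; rewrite lee_fin exprn_ge0 ?enorm_ge0.
rewrite /Rintegral -/(moment4 mu).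
by move: moment4_le; case: (moment4 mu) => // r; rewrite lee_fin.
Qed.

Lemma Rintegral_ge_quartic (w : Rd R n -> R) (B c1 c2 : R) :
  measurable_fun setT w -> (forall x, `|w x| <= B) -> 0 <= c2 ->
  (forall x, c1 - c2 * enorm x ^+ 4 <= w x) ->
  c1 - c2 * K <= Rintegral mu setT w.
Proof.
move=> w_meas w_le c2_ge0 w_ge.
have cst_int : mu.-integrable setT (EFin \o (fun _ : Rd R n => c1)).
  by apply: (@bounded_integrable _ _ _ _ _ `|c1|) => //; exact: measurable_cst.
have quartic_int : mu.-integrable setT (EFin \o (fun x => c2 * quartic x)).
  by apply: eq_integrable (integrableZl measurableT c2 moment4_integrable).
have lb_int : mu.-integrable setT (EFin \o (fun x => c1 - c2 * quartic x)).
  by apply: eq_integrable (integrableB measurableT cst_int quartic_int).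
apply: (@le_trans _ _ (Rintegral mu setT (fun x => c1 - c2 * quartic x))).
  rewrite RintegralB // Rintegral_cst // (RintegralZl _ measurableT moment4_integrable).
  rewrite (_ : fine _ = 1); last exact: (congr1 fine (probability_setT mu)).
  by rewrite mulr1 lerD2l lerN2 ler_wpM2l // Rintegral_moment4_le.
apply: le_Rintegral => //; first exact: (bounded_integrable mu w_meas w_le).
by move=> x _; exact: w_ge.
Qed.

End FourthMoment.

Section Weight.
Variables (R : realType) (n : nat) (F : 'rV[R]_n -> R) (xstar : 'rV[R]_n).
Variables (alpha LF cu cl Rl K : R).
Hypotheses (alpha_gt0 : 0 < alpha) (LF_gt0 : 0 < LF) (cu_gt0 : 0 < cu).
Hypothesis cl_gt0 : 0 < cl.
Hypothesis F_ge_min : forall x, F xstar <= F x.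
Hypothesis F_lip : forall x y,
  `|F x - F y| <= LF * (1 + enorm x + enorm y) * enorm (x - y).
Hypothesis F_le_quadratic : forall x, F x - F xstar <= cu * (1 + enorm x ^+ 2).
Hypothesis F_ge_quadratic : forall x, Rl < enorm x ->
  cl * enorm x ^+ 2 <= F x - F xstar.

Local Notation w := (omega alpha F).

Let w_min := expR (- (alpha * F xstar)).
Let M := w_min * ((1 + Rl) ^+ 2 + 2 + 2 / (alpha * cl)).
Let L := 2 * M * (1 + 3 * (alpha * LF)).
Let z0 := w_min * expR (- (alpha * cu * (2 + K))).

Lemma omega_gt0 x : 0 < w x.
Proof. exact: expR_gt0. Qed.

Lemma omegaE x : w x = w_min * expR (- (alpha * (F x - F xstar))).
Proof. by rewrite /omega /w_min -expRD; congr expR; ring. Qed.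

Lemma omega_decay x : (1 + enorm x) ^+ 2 * w x <= M.
Proof.
rewrite omegaE mulrCA ler_wpM2l ?expR_ge0 //.
apply: sqr1D_mul_expN_le (mulr_gt0 alpha_gt0 cl_gt0) (enorm_ge0 x) _ _.
  by apply: mulr_ge0; [exact: ltW | rewrite subr_ge0].
by move=> x_gt; rewrite -mulrA; apply: ler_wpM2l; [exact: ltW | exact: F_ge_quadratic].
Qed.

Lemma normr_mul_omega_le (a : R) x : `|a| <= 1 + enorm x -> `|a * w x| <= M.
Proof.
move=> a_le; rewrite normrM (gtr0_norm (omega_gt0 x)).
apply: le_trans (ler_wpM2r (ltW (omega_gt0 x)) a_le) _.
apply: le_trans (omega_decay x); rewrite expr2 -mulrA ler_peMl //.
  by apply: mulr_ge0; [rewrite addr_ge0 ?enorm_ge0 | exact: ltW (omega_gt0 x)].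
by rewrite lerDl enorm_ge0.
Qed.

Lemma normr_omega_le x : `|w x| <= M.
Proof.
by rewrite -[w x]mul1r normr_mul_omega_le // normr1 lerDl enorm_ge0.
Qed.

Lemma normr_coord_omega_le (i : 'I_n) (x : 'rV[R]_n) : `|x ord0 i * w x| <= M.
Proof.
by apply: normr_mul_omega_le; apply: le_trans (coord_le_enorm x i) _; rewrite lerDr.
Qed.

Let M_ge0 : 0 <= M.
Proof. exact: le_trans (normr_omega_le xstar). Qed.

Let L_ge0 : 0 <= L.
Proof. have := M_ge0; have := mulr_gt0 alpha_gt0 LF_gt0; rewrite /L; nra. Qed.

Lemma omega_dist_le x y : `|w x - w y| <=
  alpha * LF * (1 + enorm x + enorm y) * enorm (x - y) * (w x + w y).
Proof.
apply: le_trans (expR_dist_le _ _) _; rewrite ler_wpM2r ?addr_ge0 ?expR_ge0 //.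
have -> : - (alpha * F x) - - (alpha * F y) = - (alpha * (F x - F y)) by ring.
rewrite normrN normrM gtr0_norm // -!mulrA ler_wpM2l ?(ltW alpha_gt0) // !mulrA.
exact: F_lip.
Qed.

Lemma omega_near_le x y : enorm (x - y) <= 1 ->
  (1 + enorm x + enorm y) * (1 + enorm y) * (w x + w y) <= 6 * M.
Proof.
move=> xy_le1.
have y_le := enorm_le_distD x y.
have x_le := enorm_le_distD y x; rewrite -enorm_distC in x_le.
have x_ge0 := enorm_ge0 x; have y_ge0 := enorm_ge0 y.
have wx_ge0 := ltW (omega_gt0 x); have wy_ge0 := ltW (omega_gt0 y).
have growth_x : (1 + enorm x + enorm y) * (1 + enorm y) <= 4 * (1 + enorm x) ^+ 2.
  by rewrite expr2; nra.
have growth_y : (1 + enorm x + enorm y) * (1 + enorm y) <= 2 * (1 + enorm y) ^+ 2.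
  by rewrite expr2; nra.
have := ler_wpM2r wx_ge0 growth_x; have := omega_decay x.
have := ler_wpM2r wy_ge0 growth_y; have := omega_decay y.
lra.
Qed.

(* Far apart points are handled by the decay of [w], nearby ones by
   [omega_dist_le]. *)
Lemma mul_omega_lipschitz (g : 'rV[R]_n -> R) :
  (forall x, `|g x| <= 1 + enorm x) ->
  (forall x y, `|g x - g y| <= enorm (x - y)) ->
  forall x y, `|g x * w x - g y * w y| <= L * enorm (x - y).
Proof.
move=> g_le g_lip x y.
have gx_le := normr_mul_omega_le (g_le x); have gy_le := normr_mul_omega_le (g_le y).
have aLF_ge0 : 0 <= alpha * LF by rewrite mulr_ge0 ?ltW.
have -> : L = 2 * M + 6 * M * (alpha * LF) by rewrite /L; ring.
case: (lerP 1 (enorm (x - y))) => [far|near].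
  apply: le_trans (ler_normB _ _) _.
  have := ler_wpM2l M_ge0 far.
  have := mulr_ge0 (mulr_ge0 M_ge0 aLF_ge0) (enorm_ge0 (x - y)).
  lra.
have -> : g x * w x - g y * w y = (g x - g y) * w x + g y * (w x - w y) by ring.
apply: le_trans (ler_normD _ _) _; rewrite !normrM (gtr0_norm (omega_gt0 x)).
have wx_le : w x <= M by apply: le_trans (ler_norm _) (normr_omega_le x).
have first_le : `|g x - g y| * w x <= M * enorm (x - y).
  by rewrite mulrC; exact: ler_pM (ltW (omega_gt0 x)) (normr_ge0 _) wx_le (g_lip x y).
have second_le : `|g y| * `|w x - w y| <= 6 * M * (alpha * LF) * enorm (x - y).
  apply: le_trans (ler_pM (normr_ge0 _) (normr_ge0 _) (g_le y) (omega_dist_le x y)) _.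
  rewrite [leLHS](_ : _ = alpha * LF * enorm (x - y) *
      ((1 + enorm x + enorm y) * (1 + enorm y) * (w x + w y))); last by ring.
  rewrite [leRHS](_ : _ = alpha * LF * enorm (x - y) * (6 * M)); last by ring.
  apply: ler_wpM2l; first exact: mulr_ge0 aLF_ge0 (enorm_ge0 _).
  exact: omega_near_le (ltW near).
have := mulr_ge0 M_ge0 (enorm_ge0 (x - y)); lra.
Qed.

Lemma omega_lipschitz x y : `|w x - w y| <= L * enorm (x - y).
Proof.
have := @mul_omega_lipschitz (fun=> 1) _ _ x y; rewrite !mul1r; apply.
- by move=> z; rewrite normr1 lerDl enorm_ge0.
- by move=> u v; rewrite subrr normr0 enorm_ge0.
Qed.

Lemma coord_omega_lipschitz (i : 'I_n) (x y : 'rV[R]_n) :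
  `|x ord0 i * w x - y ord0 i * w y| <= L * enorm (x - y).
Proof.
apply: (@mul_omega_lipschitz (fun z => z ord0 i)) => [z|u v].
  by apply: le_trans (coord_le_enorm z i) _; rewrite lerDr.
by have := coord_le_enorm (u - v) i; rewrite !mxE.
Qed.

Lemma measurable_omega : measurable_fun [set: Rd R n] (w : Rd R n -> R).
Proof.
have F_meas := continuous_measurable_Rd (continuous_of_enorm_lipschitz F_lip).
apply: measurableT_comp; first exact: measurable_expR.
by apply: measurable_funN; apply: measurable_funM => //; exact: measurable_cst.
Qed.

Lemma measurable_coord_omega (i : 'I_n) :
  measurable_fun [set: Rd R n] (fun x : Rd R n => x ord0 i * w x).
Proof. exact: measurable_funM (measurable_coord i) measurable_omega. Qed.

Lemma omega_ge_quartic x :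
  z0 * (1 + alpha * cu * K) - z0 * (alpha * cu) * enorm x ^+ 4 <= w x.
Proof.
set a := alpha * (F x - F xstar); set b := alpha * cu * (2 + K).
have sqr_le : enorm x ^+ 2 <= 1 + enorm x ^+ 4.
  have := sqr_ge0 (enorm x ^+ 2 - 1); have := sqr_ge0 (enorm x).
  by rewrite -[_ ^+ 4]/(_ ^+ (2 * 2)) exprM; nra.
have a_le : a <= alpha * cu * (2 + enorm x ^+ 4).
  rewrite /a -mulrA ler_wpM2l ?(ltW alpha_gt0) //.
  apply: le_trans (F_le_quadratic x) _; rewrite ler_wpM2l ?(ltW cu_gt0) //; lra.
have tangent : 1 + (b - a) <= expR (b - a) := expR_ge1Dx _.
have -> : w x = z0 * expR (b - a).
  by rewrite omegaE /z0 -mulrA -expRD; congr (_ * expR _); rewrite /a /b; ring.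
rewrite -[z0 * (alpha * cu) * _]mulrA -mulrBr ler_wpM2l ?mulr_ge0 ?expR_ge0 //.
by apply: le_trans tangent; rewrite /b; have := mulr_gt0 alpha_gt0 cu_gt0; nra.
Qed.

Lemma omega_mass_ge (mu : probability (Rd R n) R) :
  (moment4 mu <= K%:E)%E -> z0 <= Rintegral mu setT w.
Proof.
move=> moment_le.
have := Rintegral_ge_quartic moment_le measurable_omega normr_omega_le _
  omega_ge_quartic.
by rewrite (_ : _ - _ = z0); [apply; rewrite !mulr_ge0 ?ltW ?expR_gt0 | ring].
Qed.

Lemma Xalpha_dist_le_cost : exists2 C : R, 0 <= C &
  forall (mu nu : probability (Rd R n) R) pi D,
    (moment4 mu <= K%:E)%E -> (moment4 nu <= K%:E)%E -> coupling mu nu pi ->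
    (\int[pi]_z (enorm (z.1 - z.2))%:E)%E = D%:E ->
    enorm (Xalpha alpha F mu - Xalpha alpha F nu) <= C * D.
Proof.
have z0_gt0 : 0 < z0 by rewrite mulr_gt0 ?expR_gt0.
exists (n%:R * (L * (z0^-1 + M / z0 ^+ 2))).
  apply: mulr_ge0 => //; apply: mulr_ge0 => //.
  by rewrite addr_ge0 ?divr_ge0 ?invr_ge0 ?exprn_ge0 ?(ltW z0_gt0).
move=> mu nu pi D mu_le nu_le pi_coupling cost_D.
have mass_dist := coupling_Rintegral_dist_le pi_coupling measurable_omega
  normr_omega_le L_ge0 omega_lipschitz cost_D.
have mean_dist i := coupling_Rintegral_dist_le pi_coupling
  (measurable_coord_omega i) (normr_coord_omega_le i) L_ge0
  (coord_omega_lipschitz i) cost_D.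
have mean_le i :=
  normr_Rintegral_le nu (measurable_coord_omega i) (normr_coord_omega_le i).
apply: le_trans (enorm_le_sum_norm _) _.
rewrite (_ : _ * D = \sum_(i < n) (L * D / z0 + M * (L * D) / z0 ^+ 2)); last first.
  by rewrite sumr_const card_ord -mulr_natl; field; rewrite gt_eqF.
apply: ler_sum => i _; rewrite !mxE.
exact: dist_invrM_le z0_gt0 (omega_mass_ge mu_le) (omega_mass_ge nu_le)
  (mean_le i) (mean_dist i) mass_dist.
Qed.

End Weight.

Unset Implicit Arguments.

Theorem lemma3p3 (R : realType) (d : nat) (F : 'rV[R]_d -> R)
  (xstar : 'rV[R]_d) (hxstar : forall x, F xstar <= F x)
  (A1 : exists m : R, forall x, m <= F x)
  (LF cu cl Rl : R) (hLF : 0 < LF) (hcu : 0 < cu) (hcl : 0 < cl) (hRl : 0 < Rl)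
  (Hlip : forall x y : 'rV[R]_d,
     `|F x - F y| <= LF * (1 + enorm x + enorm y) * enorm (x - y))
  (Hup : forall x : 'rV[R]_d, F x - F xstar <= cu * (1 + enorm x ^+ 2))
  (Hlow : forall x : 'rV[R]_d, Rl < enorm x ->
     cl * enorm x ^+ 2 <= F x - F xstar)
  (alpha K : R) (halpha : 0 < alpha) (hK : 0 < K) :
  exists C0 : R, 0 < C0 /\
    forall mu muh : probability (Rd R d) R,
      (moment4 mu <= K%:E)%E -> (moment4 muh <= K%:E)%E ->
      ((enorm (Xalpha alpha F mu - Xalpha alpha F muh))%:E
         <= C0%:E * W1 mu muh)%E.
Proof.
have [C C_ge0 Xalpha_le] :=
  Xalpha_dist_le_cost K halpha hLF hcu hcl hxstar Hlip Hup Hlow.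
exists (C + 1); split; first by rewrite ltr_wpDl.
move=> mu muh mu_le muh_le; apply: lee_pmul_W1 => [|pi D pi_coupling cost_D D_ge0].
  by rewrite ltr_wpDl.
apply: le_trans (Xalpha_le _ _ _ _ mu_le muh_le pi_coupling cost_D) _.
by rewrite ler_wpM2r // lerDl.
Qed.
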